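(* Let $S$ be a compact surface, $H\leq G$, $\hat p$ a tuple of distinct points of $\mathrm{int}(S)$ and $q\in\mathrm{int}(S_{\hat p})$. For $n>0$ let $$A_{q,n}=\{[wh]:\ h\in H_{\hat p},\ w\in U_{1/n}\cap G_{\hat p},\ wh(q)=q\}\subseteq\mathrm{PMCG}(S_{\hat p,q}),$$ and $F_q=\bigcap_{n>0}A_{q,n}$. Then $F_q$ is closed under multiplication. Consequently, if $A_{q,n}$ is finite for some $n>0$, then $F_q$ is a finite subgroup of $\mathrm{PMCG}(S_{\hat p,q})$.
   Context: $G=\mathrm{Homeo}_{\partial S}(S)$ with the compact-open topology; $S$ carries a fixed hyperbolic or flat Riemannian metric $d$ with geodesic boundary. $V_\epsilon=\{g\in G: d(x,gx)<\epsilon\ \forall x\in S\}$, $U_\epsilon=V_\epsilon\cap V_\epsilon^{-1}$. $G_{\hat p}$, $H_{\hat p}$ are pointwise stabilizers of the points of $\hat p$; $S_{\hat p,q}$ is $S$ with the points of $\hat p$ and $q$ removed; $\mathrm{PMCG}(S_{\hat p,q})$ is the quotient of $G_{\hat p,q}$ by homotopies fixing $\partial S$, $\hat p$ and $q$, and $[g]$ is the class of $g$. *)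

From Stdlib Require Import Reals List.
Open Scope R_scope.

Inductive geom := Flat | Hyperbolic.

Definition eucl_dist (z w : R * R) : R :=
  sqrt ((fst z - fst w)^2 + (snd z - snd w)^2).

(* hyperbolic distance on the upper half-plane: arcosh(1 + |z-w|^2/(2 y_z y_w)) *)
Definition hyp_dist (z w : R * R) : R :=
  let t := 1 + ((fst z - fst w)^2 + (snd z - snd w)^2) / (2 * snd z * snd w) in
  ln (t + sqrt (t * t - 1)).

Definition mdist (g : geom) : R * R -> R * R -> R :=
  match g with Flat => eucl_dist | Hyperbolic => hyp_dist end.

(* model domain: the full plane (full = true) or the closed half-plane
   {x >= 0}, bounded by the geodesic {x = 0} (full = false) *)
Definition model_dom (g : geom) (full : bool) (z : R * R) : Prop :=
  match g, full with
  | Flat, true => True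
  | Flat, false => 0 <= fst z
  | Hyperbolic, true => 0 < snd z
  | Hyperbolic, false => 0 < snd z /\ 0 <= fst z
  end.

Definition chart {S : Type} (g : geom) (full : bool) (d : S -> S -> R) (p : S)
  (Q : R * R -> Prop) : Prop :=
  exists r : R, 0 < r /\ exists f : S -> R * R,
    Q (f p) /\
    (forall a, d p a < r -> model_dom g full (f a)) /\
    (forall a b, d p a < r -> d p b < r -> mdist g (f a) (f b) = d a b) /\
    (forall z, model_dom g full z -> mdist g (f p) z < r ->
       exists a, d p a < r /\ f a = z).

Definition is_metric {S : Type} (d : S -> S -> R) : Prop :=
  (forall x y, 0 <= d x y) /\ (forall x y, d x y = 0 <-> x = y) /\
  (forall x y, d x y = d y x) /\ (forall x y z, d x z <= d x y + d y z).

Definition seq_compact {S : Type} (d : S -> S -> R) : Prop :=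
  forall u : nat -> S, exists (phi : nat -> nat) (l : S),
    (forall n, (phi n < phi (Datatypes.S n))%nat) /\
    forall eps, 0 < eps -> exists N, forall n, (N <= n)%nat -> d (u (phi n)) l < eps.

Definition bdry {S : Type} (g : geom) (d : S -> S -> R) (p : S) : Prop :=
  ~ chart g true d p (fun _ => True).

(** (S,d) is a compact surface whose metric d is the distance of a flat
    (g = Flat) or hyperbolic (g = Hyperbolic) Riemannian metric with geodesic
    boundary: a compact geodesic metric space locally isometric to the model
    plane (interior points) or to the model half-plane bounded by a geodesic
    (boundary points). *)
Definition geom_surface {S : Type} (g : geom) (d : S -> S -> R) : Prop :=
  is_metric d /\ seq_compact d /\
  (forall x y, exists m, d x m = d x y / 2 /\ d m y = d x y / 2) /\
  (forall p, chart g true d p (fun _ => True) \/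
             chart g false d p (fun z => fst z = 0)).

Definition mcont {S : Type} (d : S -> S -> R) (f : S -> S) : Prop :=
  forall x eps, 0 < eps -> exists delta, 0 < delta /\
    forall y, d x y < delta -> d (f x) (f y) < eps.

Definition is_homeo {S : Type} (d : S -> S -> R) (f : S -> S) : Prop :=
  mcont d f /\ exists finv : S -> S,
    (forall x, finv (f x) = x) /\ (forall x, f (finv x) = x) /\ mcont d finv.

Definition inG {S : Type} (g : geom) (d : S -> S -> R) (f : S -> S) : Prop :=
  is_homeo d f /\ forall x, bdry g d x -> f x = x.

Definition idS {S : Type} : S -> S := fun x => x.
Definition compS {S : Type} (f h : S -> S) : S -> S := fun x => f (h x).

Definition subgroupG {S : Type} (g : geom) (d : S -> S -> R) (H : (S -> S) -> Prop) : Prop :=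
  (forall h, H h -> inG g d h) /\ H idS /\
  (forall h1 h2, H h1 -> H h2 -> H (compS h1 h2)) /\
  (forall h hi, H h -> (forall x, hi (h x) = x) -> (forall x, h (hi x) = x) -> H hi).

Definition fixes_pts {S : Type} (ps : list S) (f : S -> S) : Prop :=
  forall x, In x ps -> f x = x.

Definition V_eps {S : Type} (d : S -> S -> R) (eps : R) (f : S -> S) : Prop :=
  forall x, d x (f x) < eps.

Definition U_eps {S : Type} (g : geom) (d : S -> S -> R) (eps : R) (f : S -> S) : Prop :=
  inG g d f /\ V_eps d eps f /\
  forall fi, (forall x, fi (f x) = x) -> (forall x, f (fi x) = x) -> V_eps d eps fi.

Definition inGpq {S : Type} (g : geom) (d : S -> S -> R) (ps : list S) (q : S)
  (f : S -> S) : Prop :=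
  inG g d f /\ fixes_pts ps f /\ f q = q.

(** Homotopy fixing ∂S, p̂ and q: equality of classes in PMCG(S_{p̂,q}). *)
Definition pmcg_eq {S : Type} (g : geom) (d : S -> S -> R) (ps : list S) (q : S)
  (f1 f2 : S -> S) : Prop :=
  exists Hm : R -> S -> S,
    (forall x, Hm 0 x = f1 x) /\ (forall x, Hm 1 x = f2 x) /\
    (forall t x eps, 0 <= t <= 1 -> 0 < eps -> exists delta, 0 < delta /\
       forall t' y, 0 <= t' <= 1 -> Rabs (t - t') < delta -> d x y < delta ->
         d (Hm t x) (Hm t' y) < eps) /\
    (forall t x, 0 <= t <= 1 -> (bdry g d x \/ In x ps \/ x = q) -> Hm t x = x).

Definition inA {S : Type} (g : geom) (d : S -> S -> R) (H : (S -> S) -> Prop)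
  (ps : list S) (q : S) (n : nat) (f : S -> S) : Prop :=
  inGpq g d ps q f /\
  exists h w, H h /\ fixes_pts ps h /\
    U_eps g d (1 / INR n) w /\ fixes_pts ps w /\
    w (h q) = q /\ pmcg_eq g d ps q f (compS w h).

Definition inF {S : Type} (g : geom) (d : S -> S -> R) (H : (S -> S) -> Prop)
  (ps : list S) (q : S) (f : S -> S) : Prop :=
  inGpq g d ps q f /\ forall n, (0 < n)%nat -> inA g d H ps q n f.

Definition finitely_many_classes {S : Type} (g : geom) (d : S -> S -> R)
  (ps : list S) (q : S) (P : (S -> S) -> Prop) : Prop :=
  exists l : list (S -> S),
    forall f, P f -> exists f', In f' l /\ pmcg_eq g d ps q f f'.

Definition pmcg_subgroup {S : Type} (g : geom) (d : S -> S -> R)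
  (ps : list S) (q : S) (P : (S -> S) -> Prop) : Prop :=
  P idS /\
  (forall f1 f2, P f1 -> P f2 -> P (compS f1 f2)) /\
  (forall f fi, P f -> (forall x, fi (f x) = x) -> (forall x, f (fi x) = x) -> P fi).

(** The class [w h] with [w] uniformly small and [h] in [H] is a product in
    which the small factors can be gathered to the left:
    [w1 h1 w2 h2 = (w1 (h1 w2 h1^-1)) (h1 h2)], and [h1 w2 h1^-1] is as small as
    we like once [w2] is small enough, by uniform continuity of [h1] on the
    compact surface.  If some
    [A_{q,n}] is finite, so is [F_q]; then two powers [f^i], [f^j] ([i < j]) of
    an element of [F_q] are homotopic, so [f^(j-i)] is homotopic to the
    identity and [f^-1] is homotopic to [f^(j-i-1)], which lies in [F_q]. *)

From Stdlib Require Import Arith Reals List Lia Lra Classical ClassicalEpsilon FinFun.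
Open Scope R_scope.

Lemma left_inv_eq_right_inv {T : Type} (f fi c : T -> T) :
  (forall x, fi (f x) = x) -> (forall x, f (c x) = x) -> forall x, fi x = c x.
Proof. intros Hl Hr x. rewrite <- (Hr x) at 1. apply Hl. Qed.

Lemma pigeonhole_nat {A : Type} (l : list A) (P : nat -> A -> Prop) :
  (forall k, exists e, In e l /\ P k e) ->
  exists i j e, (i < j)%nat /\ P i e /\ P j e.
Proof.
  intro Hl. apply NNPP; intro Hno.
  destruct (choice (fun k e => In e l /\ P k e) Hl) as [c Hc].
  assert (c_inj : Injective c).
  { intros i j Heq. destruct (lt_eq_lt_dec i j) as [[Hlt|]|Hlt]; auto; exfalso; apply Hno.
    - exists i, j, (c i). split; [exact Hlt|]. split; [apply Hc|]. rewrite Heq. apply Hc.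
    - exists j, i, (c j). split; [exact Hlt|]. split; [apply Hc|]. rewrite <- Heq. apply Hc. }
  assert (Hincl : incl (map c (seq 0 (S (length l)))) l).
  { intros x Hx. apply in_map_iff in Hx. destruct Hx as [k [<- _]]. apply Hc. }
  pose proof (NoDup_incl_length (Injective_map_NoDup c_inj (seq_NoDup _ _)) Hincl) as Hlen.
  rewrite length_map, length_seq in Hlen. lia.
Qed.

Lemma iter_inv_cancel {T : Type} (f fi : T -> T) :
  (forall x, fi (f x) = x) ->
  forall i j x, (i <= j)%nat -> Nat.iter i fi (Nat.iter j f x) = Nat.iter (j - i) f x.
Proof.
  intros Hinv i j x Hij.
  replace j with (i + (j - i))%nat by lia. rewrite Nat.add_comm, Nat.add_sub, Nat.add_comm.
  rewrite Nat.iter_add. generalize (Nat.iter (j - i) f x). clear j Hij.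
  induction i as [|i IH]; intro y; [reflexivity|].
  rewrite Nat.iter_succ_r. change (Nat.iter (S i) f y) with (f (Nat.iter i f y)).
  rewrite Hinv. apply IH.
Qed.

Section Homeomorphisms.

Variables (T : Type) (g : geom) (d : T -> T -> R).

Lemma mcont_id : mcont d idS.
Proof. intros x eps Heps. exists eps; auto. Qed.

Lemma mcont_comp f h : mcont d f -> mcont d h -> mcont d (compS f h).
Proof.
  intros Hf Hh x eps Heps. destruct (Hf (h x) eps Heps) as [d1 [Hd1 H1]].
  destruct (Hh x d1 Hd1) as [d2 [Hd2 H2]]. exists d2; split; auto.
  intros y Hy. apply H1, H2, Hy.
Qed.

Lemma mcont_ext f f' : (forall x, f x = f' x) -> mcont d f -> mcont d f'.
Proof.
  intros Hext Hf x eps Heps. destruct (Hf x eps Heps) as [dl [Hdl Hc]].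
  exists dl; split; auto. intros y Hy. rewrite <- !Hext. auto.
Qed.

Lemma is_homeo_id : is_homeo d idS.
Proof. split; [apply mcont_id|]. exists idS; repeat split; apply mcont_id. Qed.

Lemma is_homeo_comp f h : is_homeo d f -> is_homeo d h -> is_homeo d (compS f h).
Proof.
  intros [Cf [fi [Hf1 [Hf2 Cfi]]]] [Ch [hi [Hh1 [Hh2 Chi]]]].
  split; [apply mcont_comp; auto|]. exists (compS hi fi); unfold compS; repeat split.
  - intro x. rewrite Hf1. apply Hh1.
  - intro x. rewrite Hh2. apply Hf2.
  - apply mcont_comp; auto.
Qed.

Lemma is_homeo_inv f fi :
  is_homeo d f -> (forall x, fi (f x) = x) -> (forall x, f (fi x) = x) -> is_homeo d fi.
Proof.
  intros [Cf [fi' [Hl' [Hr' Cfi']]]] Hl Hr. split.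
  - apply (mcont_ext fi'); auto. intro x. symmetry.
    apply (left_inv_eq_right_inv f fi fi'); auto.
  - exists f; repeat split; auto.
Qed.

Lemma inG_id : inG g d idS.
Proof. split; [apply is_homeo_id | reflexivity]. Qed.

Lemma inG_comp f h : inG g d f -> inG g d h -> inG g d (compS f h).
Proof.
  intros [Hf Bf] [Hh Bh]. split; [apply is_homeo_comp; auto|].
  intros x Hx. unfold compS. rewrite Bh; auto.
Qed.

Lemma inG_inv f fi :
  inG g d f -> (forall x, fi (f x) = x) -> (forall x, f (fi x) = x) -> inG g d fi.
Proof.
  intros [Hf Bf] Hl Hr. split; [eapply is_homeo_inv; eauto|].
  intros x Hx. rewrite <- (Bf x Hx) at 1. apply Hl.
Qed.

Lemma inG_inverse f :
  inG g d f -> exists fi, (forall x, fi (f x) = x) /\ (forall x, f (fi x) = x) /\ inG g d fi.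
Proof.
  intros Gf. pose proof Gf as [[_ [fi [Hl [Hr _]]]] _].
  exists fi. split; [auto|]. split; [auto|]. eapply inG_inv; eauto.
Qed.

Lemma fixes_pts_inv (ps : list T) (f fi : T -> T) :
  fixes_pts ps f -> (forall x, fi (f x) = x) -> fixes_pts ps fi.
Proof. intros Hf Hl x Hx. rewrite <- (Hf x Hx) at 1. apply Hl. Qed.

Variables (ps : list T) (q : T).

Lemma inGpq_id : inGpq g d ps q idS.
Proof. split; [apply inG_id|]. split; [intros x _|]; reflexivity. Qed.

Lemma inGpq_comp f h : inGpq g d ps q f -> inGpq g d ps q h -> inGpq g d ps q (compS f h).
Proof.
  intros [Gf [Pf Qf]] [Gh [Ph Qh]]. split; [apply inG_comp; auto|]. unfold compS. split.
  - intros x Hx. rewrite Ph; auto.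
  - rewrite Qh. exact Qf.
Qed.

Lemma inGpq_inv f fi :
  inGpq g d ps q f -> (forall x, fi (f x) = x) -> (forall x, f (fi x) = x) ->
  inGpq g d ps q fi.
Proof.
  intros [Gf [Pf Qf]] Hl Hr. split; [eapply inG_inv; eauto|]. split.
  - eapply fixes_pts_inv; eauto.
  - rewrite <- Qf at 1. apply Hl.
Qed.

Lemma inGpq_iter f k : inGpq g d ps q f -> inGpq g d ps q (Nat.iter k f).
Proof.
  intros Gf. induction k as [|k IH]; [apply inGpq_id|].
  apply (inGpq_comp f (Nat.iter k f)); auto.
Qed.

End Homeomorphisms.

Section Homotopy.

Variables (T : Type) (g : geom) (d : T -> T -> R) (ps : list T) (q : T).
Hypothesis d_metric : is_metric d.

Lemma pmcg_refl f : inGpq g d ps q f -> pmcg_eq g d ps q f f.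
Proof.
  intros [[[Cf _] Bf] [Pf Qf]]. exists (fun _ x => f x). repeat split; auto.
  - intros t x eps _ Heps. destruct (Cf x eps Heps) as [dl [Hdl Hc]].
    exists dl; split; auto.
  - intros _ x _ [Hx|[Hx|Hx]]; [auto | auto | subst; exact Qf].
Qed.

Lemma pmcg_ext f1 f2 f1' f2' :
  (forall x, f1 x = f1' x) -> (forall x, f2 x = f2' x) ->
  pmcg_eq g d ps q f1 f2 -> pmcg_eq g d ps q f1' f2'.
Proof.
  intros E1 E2 [K [K0 [K1 [Kc Kf]]]]. exists K. repeat split; auto.
  - intro x. rewrite K0. apply E1.
  - intro x. rewrite K1. apply E2.
Qed.

Lemma pmcg_sym f1 f2 : pmcg_eq g d ps q f1 f2 -> pmcg_eq g d ps q f2 f1.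
Proof.
  intros [K [K0 [K1 [Kc Kf]]]]. exists (fun t x => K (1 - t) x). repeat split.
  - intro x. replace (1 - 0) with 1 by lra. auto.
  - intro x. replace (1 - 1) with 0 by lra. auto.
  - intros t x eps Ht Heps. destruct (Kc (1 - t) x eps) as [dl [Hdl Hc]]; [lra|auto|].
    exists dl; split; auto. intros t' y Ht' Htt Hxy. apply Hc; auto; [lra|].
    replace (1 - t - (1 - t')) with (- (t - t')) by ring. rewrite Rabs_Ropp; auto.
  - intros t x Ht Hx. apply Kf; auto; lra.
Qed.

(* The concatenated homotopy runs [K] on [0, 1/2] and [L] on [1/2, 1]; near
   [t = 1/2] both halves are within [eps/2] of [K 1 x = L 0 x]. *)
Lemma pmcg_trans f1 f2 f3 :
  pmcg_eq g d ps q f1 f2 -> pmcg_eq g d ps q f2 f3 -> pmcg_eq g d ps q f1 f3.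
Proof.
  destruct d_metric as [_ [Hz [_ Htri]]].
  intros [K [K0 [K1 [Kc Kf]]]] [L [L0 [L1 [Lc Lf]]]].
  exists (fun t x => if Rle_dec t (1/2) then K (2 * t) x else L (2 * t - 1) x).
  repeat split.
  - intro x. destruct (Rle_dec 0 (1/2)); [|lra]. rewrite Rmult_0_r. auto.
  - intro x. destruct (Rle_dec 1 (1/2)); [lra|]. replace (2 * 1 - 1) with 1 by ring. auto.
  - intros t x eps Ht Heps.
    destruct (Kc (Rmin (2 * t) 1) x (eps / 2)) as [d1 [Hd1 HK]];
      [split; [apply Rmin_glb; lra | apply Rmin_r] | lra |].
    destruct (Lc (Rmax (2 * t - 1) 0) x (eps / 2)) as [d2 [Hd2 HL]];
      [split; [apply Rmax_r | apply Rmax_lub; lra] | lra |].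
    assert (Hd : 0 < Rmin d1 d2) by (apply Rmin_glb_lt; auto).
    exists (Rmin d1 d2 / 2). split; [lra|].
    assert (Hxx : d x x = 0) by (apply Hz; reflexivity).
    intros t' y Ht' Htt Hxy.
    pose proof (Rmin_l d1 d2). pose proof (Rmin_r d1 d2).
    apply Rabs_def2 in Htt. destruct Htt as [Ht1 Ht2].
    destruct (Rle_dec t (1/2)); destruct (Rle_dec t' (1/2)).
    + rewrite Rmin_left in HK by lra.
      enough (d (K (2 * t) x) (K (2 * t') y) < eps / 2) by lra.
      apply HK; [lra | apply Rabs_def1 | ]; lra.
    + rewrite Rmin_left in HK by lra. rewrite Rmax_right in HL by lra.
      assert (E1 : d (K (2 * t) x) (K 1 x) < eps / 2)
        by (apply HK; [lra | apply Rabs_def1 | ]; lra).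
      assert (E2 : d (L 0 x) (L (2 * t' - 1) y) < eps / 2)
        by (apply HL; [lra | apply Rabs_def1 | ]; lra).
      rewrite K1 in E1. rewrite L0 in E2.
      pose proof (Htri (K (2 * t) x) (f2 x) (L (2 * t' - 1) y)). lra.
    + rewrite Rmin_right in HK by lra. rewrite Rmax_left in HL by lra.
      assert (E1 : d (L (2 * t - 1) x) (L 0 x) < eps / 2)
        by (apply HL; [lra | apply Rabs_def1 | ]; lra).
      assert (E2 : d (K 1 x) (K (2 * t') y) < eps / 2)
        by (apply HK; [lra | apply Rabs_def1 | ]; lra).
      rewrite K1 in E2. rewrite L0 in E1.
      pose proof (Htri (L (2 * t - 1) x) (f2 x) (K (2 * t') y)). lra.
    + rewrite Rmax_left in HL by lra.
      enough (d (L (2 * t - 1) x) (L (2 * t' - 1) y) < eps / 2) by lra.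
      apply HL; [lra | | lra].
      replace (2 * t - 1 - (2 * t' - 1)) with (2 * (t - t')) by ring.
      apply Rabs_def1; lra.
  - intros t x Ht Hx. destruct (Rle_dec t (1/2)); [apply Kf | apply Lf]; auto; lra.
Qed.

Lemma pmcg_comp f1 f2 f1' f2' :
  pmcg_eq g d ps q f1 f1' -> pmcg_eq g d ps q f2 f2' ->
  pmcg_eq g d ps q (compS f1 f2) (compS f1' f2').
Proof.
  intros [K [K0 [K1 [Kc Kf]]]] [L [L0 [L1 [Lc Lf]]]].
  exists (fun t x => K t (L t x)). unfold compS. repeat split.
  - intro x. rewrite L0. apply K0.
  - intro x. rewrite L1. apply K1.
  - intros t x eps Ht Heps.
    destruct (Kc t (L t x) eps Ht Heps) as [d1 [Hd1 HK]].
    destruct (Lc t x d1 Ht Hd1) as [d2 [Hd2 HL]].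
    exists (Rmin d1 d2). split; [apply Rmin_glb_lt; auto|].
    pose proof (Rmin_l d1 d2). pose proof (Rmin_r d1 d2).
    intros t' y Ht' Htt Hxy. apply HK; auto; [lra|]. apply HL; auto; lra.
  - intros t x Ht Hx. rewrite Lf; auto.
Qed.

Lemma pmcg_iter_id f fi i j :
  inGpq g d ps q fi -> (forall x, fi (f x) = x) -> (i <= j)%nat ->
  pmcg_eq g d ps q (Nat.iter i f) (Nat.iter j f) ->
  pmcg_eq g d ps q idS (Nat.iter (j - i) f).
Proof.
  intros Gfi Hinv Hij Hp.
  apply (pmcg_ext (compS (Nat.iter i fi) (Nat.iter i f))
                  (compS (Nat.iter i fi) (Nat.iter j f))).
  - intro x. unfold compS, idS. rewrite iter_inv_cancel, Nat.sub_diag; auto.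
  - intro x. unfold compS. apply iter_inv_cancel; auto.
  - apply pmcg_comp; auto. apply pmcg_refl, inGpq_iter, Gfi.
Qed.

Lemma pmcg_inv_iter f fi k :
  inGpq g d ps q fi -> (forall x, fi (f x) = x) ->
  pmcg_eq g d ps q idS (Nat.iter (S k) f) -> pmcg_eq g d ps q fi (Nat.iter k f).
Proof.
  intros Gfi Hinv Hp. apply (pmcg_ext (compS fi idS) (compS fi (Nat.iter (S k) f))).
  - reflexivity.
  - intro x. apply Hinv.
  - apply pmcg_comp; auto. apply pmcg_refl, Gfi.
Qed.

End Homotopy.

Section Smallness.

Variables (T : Type) (g : geom) (d : T -> T -> R).
Hypothesis d_metric : is_metric d.

(* Otherwise there are pairs [x_n, y_n] with [d x_n y_n < 1/(n+1)] and images
   [eps] apart; continuity at a limit point of the [x_n] contradicts this. *)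
Lemma mcont_uniform f :
  seq_compact d -> mcont d f -> forall eps, 0 < eps ->
  exists delta, 0 < delta /\ forall x y, d x y < delta -> d (f x) (f y) < eps.
Proof.
  destruct d_metric as [_ [_ [Hsym Htri]]].
  intros Hcomp Hf eps Heps. apply NNPP; intro Hno.
  assert (Hbad : forall n : nat, exists p : T * T,
    d (fst p) (snd p) < / INR (S n) /\ eps <= d (f (fst p)) (f (snd p))).
  { intro n. apply NNPP; intro Hn. apply Hno. exists (/ INR (S n)).
    split; [apply Rinv_0_lt_compat, lt_0_INR; lia|].
    intros x y Hxy. apply Rnot_le_lt. intro Hle. apply Hn. exists (x, y). auto. }
  destruct (choice _ Hbad) as [p Hp].
  destruct (Hcomp (fun n => fst (p n))) as [phi [l [Hphi Hconv]]].
  destruct (Hf l (eps / 2)) as [dl [Hdl Hl]]; [lra|].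
  destruct (Hconv (dl / 2)) as [N HN]; [lra|].
  destruct (archimed_cor1 (dl / 2)) as [M [HM HM0]]; [lra|].
  assert (Hphi_ge : forall n, (n <= phi n)%nat).
  { induction n as [|n IH]; [lia|]. specialize (Hphi n). lia. }
  set (k := phi (Nat.max N M)).
  specialize (HN (Nat.max N M) (Nat.le_max_l N M)). fold k in HN.
  assert (Hk : (M <= k)%nat) by (pose proof (Hphi_ge (Nat.max N M)); unfold k; lia).
  destruct (Hp k) as [Hp1 Hp2].
  assert (/ INR (S k) <= / INR M)
    by (apply Rinv_le_contravar; [apply lt_0_INR | apply le_INR]; lia).
  rewrite Hsym in HN.
  assert (Hfst : d l (fst (p k)) < dl) by lra.
  assert (Hsnd : d l (snd (p k)) < dl)
    by (pose proof (Htri l (fst (p k)) (snd (p k))); lra).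
  pose proof (Hl _ Hfst) as Efst. pose proof (Hl _ Hsnd) as Esnd.
  rewrite Hsym in Efst.
  pose proof (Htri (f (fst (p k))) (f l) (f (snd (p k)))). lra.
Qed.

Lemma V_eps_ext eps f f' : (forall x, f x = f' x) -> V_eps d eps f -> V_eps d eps f'.
Proof. intros Hext Hf x. rewrite <- Hext. apply Hf. Qed.

Lemma V_eps_comp a b f h : V_eps d a f -> V_eps d b h -> V_eps d (a + b) (compS f h).
Proof.
  destruct d_metric as [_ [_ [_ Htri]]]. intros Hf Hh x.
  pose proof (Htri x (h x) (f (h x))). pose proof (Hf (h x)). pose proof (Hh x).
  unfold compS. lra.
Qed.

Lemma V_eps_conj delta eps h hi w :
  (forall x, h (hi x) = x) -> (forall x y, d x y < delta -> d (h x) (h y) < eps) ->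
  V_eps d delta w -> V_eps d eps (compS h (compS w hi)).
Proof. intros Hr Hunif Hw x. unfold compS. rewrite <- (Hr x) at 1. apply Hunif, Hw. Qed.

Lemma U_eps_id eps : 0 < eps -> U_eps g d eps idS.
Proof.
  destruct d_metric as [_ [Hz _]]. intros Heps.
  assert (Hid : V_eps d eps idS) by (intro x; unfold idS; rewrite (proj2 (Hz x x)); auto).
  split; [apply inG_id|]. split; [exact Hid|].
  intros fi Hl _. apply (V_eps_ext _ idS); [|exact Hid]. intro x. symmetry. apply Hl.
Qed.

Lemma U_eps_mono a b f : a <= b -> U_eps g d a f -> U_eps g d b f.
Proof.
  intros Hab [Gf [Vf Vfi]]. split; [exact Gf|]. split.
  - intro x. specialize (Vf x). lra.
  - intros fi Hl Hr x. specialize (Vfi fi Hl Hr x). lra.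
Qed.

Lemma U_eps_comp a b f h : U_eps g d a f -> U_eps g d b h -> U_eps g d (a + b) (compS f h).
Proof.
  intros [Gf [Vf Vfi]] [Gh [Vh Vhi]].
  destruct (inG_inverse T g d f Gf) as [fi [Hf1 [Hf2 _]]].
  destruct (inG_inverse T g d h Gh) as [hi [Hh1 [Hh2 _]]].
  split; [apply inG_comp; auto|]. split; [apply V_eps_comp; auto|].
  intros ci Hl Hr. rewrite Rplus_comm. apply (V_eps_ext _ (compS hi fi)).
  - intro x. symmetry. apply (left_inv_eq_right_inv (compS f h)); auto.
    intro y. unfold compS. rewrite Hh2. apply Hf2.
  - apply V_eps_comp; auto.
Qed.

Lemma U_eps_conj delta eps h hi w :
  inG g d h -> (forall x, hi (h x) = x) -> (forall x, h (hi x) = x) ->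
  (forall x y, d x y < delta -> d (h x) (h y) < eps) ->
  U_eps g d delta w -> U_eps g d eps (compS h (compS w hi)).
Proof.
  intros Gh Hl Hr Hunif [Gw [Vw Vwi]].
  destruct (inG_inverse T g d w Gw) as [wi [Hw1 [Hw2 _]]].
  split.
  { apply inG_comp; [exact Gh|]. apply inG_comp; [exact Gw|]. apply (inG_inv T g d h); auto. }
  split; [eapply V_eps_conj; eauto|].
  intros ci Hcl Hcr. apply (V_eps_ext _ (compS h (compS wi hi))).
  - intro x. symmetry. apply (left_inv_eq_right_inv (compS h (compS w hi))); auto.
    intro y. unfold compS. rewrite Hl, Hw2. apply Hr.
  - eapply V_eps_conj; eauto.
Qed.

End Smallness.

Section FixedClasses.

Variables (T : Type) (g : geom) (d : T -> T -> R) (H : (T -> T) -> Prop).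
Variables (ps : list T) (q : T).
Hypothesis d_surface : geom_surface g d.
Hypothesis H_subgroup : subgroupG g d H.

Let d_metric : is_metric d := proj1 d_surface.

Lemma inF_small_rep f eps :
  inF g d H ps q f -> 0 < eps ->
  exists h w, H h /\ fixes_pts ps h /\ U_eps g d eps w /\ fixes_pts ps w /\
    w (h q) = q /\ pmcg_eq g d ps q f (compS w h).
Proof.
  intros [_ Hf] Heps. destruct (archimed_cor1 eps Heps) as [n [Hn Hn0]].
  destruct (Hf n Hn0) as [_ [h [w [Hh [Ph [Uw Rest]]]]]].
  exists h, w. split; [exact Hh|]. split; [exact Ph|]. split; [|exact Rest].
  apply (U_eps_mono T g d (1 / INR n)); [rewrite Rdiv_1_l; lra | exact Uw].
Qed.

Lemma inF_id : inF g d H ps q idS.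
Proof.
  destruct H_subgroup as [_ [Hid _]].
  split; [apply inGpq_id|]. intros n Hn. split; [apply inGpq_id|].
  exists idS, idS. split; [exact Hid|]. split; [intros x _; reflexivity|].
  split.
  { apply U_eps_id; [exact d_metric|]. apply Rdiv_lt_0_compat; [lra | apply lt_0_INR; lia]. }
  split; [intros x _; reflexivity|]. split; [reflexivity|].
  apply pmcg_refl, inGpq_id.
Qed.

Lemma inF_comp f1 f2 :
  inF g d H ps q f1 -> inF g d H ps q f2 -> inF g d H ps q (compS f1 f2).
Proof.
  destruct H_subgroup as [HG [_ [Hmul _]]].
  intros F1 F2. pose proof (inGpq_comp T g d ps q f1 f2 (proj1 F1) (proj1 F2)) as G12.
  split; [exact G12|]. intros n Hn. split; [exact G12|].
  set (eps := 1 / INR n).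
  assert (Heps : 0 < eps) by (apply Rdiv_lt_0_compat; [lra | apply lt_0_INR; lia]).
  destruct (inF_small_rep f1 (eps / 2)) as [h1 [w1 [Hh1 [Ph1 [Uw1 [Pw1 [Qw1 Hp1]]]]]]];
    [exact F1 | lra |].
  destruct (inG_inverse T g d h1 (HG h1 Hh1)) as [h1i [Hl1 [Hr1 _]]].
  destruct (mcont_uniform T d d_metric h1 (proj1 (proj2 d_surface))
              (proj1 (proj1 (HG h1 Hh1))) (eps / 2)) as [delta [Hdelta Hunif]]; [lra|].
  destruct (inF_small_rep f2 delta) as [h2 [w2 [Hh2 [Ph2 [Uw2 [Pw2 [Qw2 Hp2]]]]]]];
    [exact F2 | exact Hdelta |].
  exists (compS h1 h2), (compS w1 (compS h1 (compS w2 h1i))).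
  split; [apply Hmul; auto|].
  split; [intros x Hx; unfold compS; rewrite Ph2, Ph1; auto|].
  split.
  { replace eps with (eps / 2 + eps / 2) by field.
    apply U_eps_comp; [exact d_metric | exact Uw1|].
    apply U_eps_conj with delta; auto. }
  split.
  { intros x Hx. unfold compS.
    rewrite (fixes_pts_inv T ps h1 h1i Ph1 Hl1), Pw2, Ph1, Pw1; auto. }
  split; [unfold compS; rewrite Hl1, Qw2; exact Qw1|].
  apply (pmcg_ext T g d ps q (compS f1 f2) (compS (compS w1 h1) (compS w2 h2)));
    [reflexivity | intro x; unfold compS; rewrite Hl1; reflexivity |].
    apply pmcg_comp; auto.
Qed.

Lemma inF_iter f k : inF g d H ps q f -> inF g d H ps q (Nat.iter k f).
Proof.
  intros Ff. induction k as [|k IH]; [apply inF_id|]. apply (inF_comp f); auto.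
Qed.

Lemma inF_pmcg_closed f f' :
  inGpq g d ps q f -> pmcg_eq g d ps q f f' -> inF g d H ps q f' -> inF g d H ps q f.
Proof.
  intros Gf Hp [_ Ff']. split; [exact Gf|]. intros n Hn.
  destruct (Ff' n Hn) as [_ [h [w [Hh [Ph [Uw [Pw [Qw Hp']]]]]]]].
  split; [exact Gf|]. exists h, w. do 5 (split; [assumption|]).
  apply pmcg_trans with f'; auto.
Qed.

Lemma inF_inv_of_finite f fi :
  finitely_many_classes g d ps q (inF g d H ps q) ->
  inF g d H ps q f -> (forall x, fi (f x) = x) -> (forall x, f (fi x) = x) ->
  inF g d H ps q fi.
Proof.
  intros [l Hl] Ff Hinv1 Hinv2.
  destruct (pigeonhole_nat l (fun k e => pmcg_eq g d ps q (Nat.iter k f) e))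
    as [i [j [e [Hij [Hi Hj]]]]].
  { intro k. apply Hl, inF_iter, Ff. }
  assert (Gfi : inGpq g d ps q fi) by (eapply inGpq_inv; eauto; apply Ff).
  assert (Hid : pmcg_eq g d ps q idS (Nat.iter (j - i) f)).
  { apply pmcg_iter_id with fi; auto; [lia |].
    apply pmcg_trans with e; auto. apply pmcg_sym, Hj. }
  destruct (j - i)%nat as [|k] eqn:Hk; [lia|].
  apply inF_pmcg_closed with (Nat.iter k f); [exact Gfi | | apply inF_iter, Ff].
  apply pmcg_inv_iter; auto.
Qed.

End FixedClasses.

Theorem mainTheorem4 :
  forall (S : Type) (g : geom) (d : S -> S -> R),
    geom_surface g d ->
  forall (H : (S -> S) -> Prop), subgroupG g d H ->
  forall (ps : list S) (q : S),
    NoDup ps -> (forall p, In p ps -> ~ bdry g d p) ->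
    ~ bdry g d q -> ~ In q ps ->
    (forall f1 f2, inF g d H ps q f1 -> inF g d H ps q f2 ->
       inF g d H ps q (compS f1 f2)) /\
    ((exists n, (0 < n)%nat /\ finitely_many_classes g d ps q (inA g d H ps q n)) ->
       pmcg_subgroup g d ps q (inF g d H ps q) /\
       finitely_many_classes g d ps q (inF g d H ps q)).
Proof.
  intros S g d Hsurf H HH ps q _ _ _ _.
  split; [apply inF_comp; auto|].
  intros [n [Hn [l Hl]]].
  assert (Hfin : finitely_many_classes g d ps q (inF g d H ps q)).
  { exists l. intros f [_ Ff]. apply Hl, Ff, Hn. }
  split; [|exact Hfin].
  split; [apply inF_id; auto|]. split; [apply inF_comp; auto|].
  intros f fi Ff Hl1 Hr1. eapply inF_inv_of_finite; eauto.
Qed.
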